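(* The embedding functor $i_{\mathrm{tffr}}\colon\mathcal R\hookrightarrow\mathfrak{sl}(2)\text{-}\mathrm{Mod}_{\mathrm{tffr}}$ is a right adjoint of the rationalization functor $F_{\mathrm{rat}}\colon\mathfrak{sl}(2)\text{-}\mathrm{Mod}_{\mathrm{tffr}}\to\mathcal R$. Therefore $\mathcal R$ is a reflective localization of $\mathfrak{sl}(2)\text{-}\mathrm{Mod}_{\mathrm{tffr}}$ with localization functor $F_{\mathrm{rat}}$. Moreover, $F_{\mathrm{rat}}$ is faithful.
   Context: $\mathfrak{sl}(2)$ has basis $L_{-1}=f$, $L_0=-\tfrac12 h$, $L_1=-e$ for a Chevalley basis $e,f,h$. Every $\mathfrak{sl}(2)$-module $(V,\rho)$ is a $\mathbb{C}[z]$-module via $z\cdot v=\rho(L_0)v$. $\mathfrak{sl}(2)\text{-}\mathrm{Mod}_{\mathrm{tffr}}$ is the full subcategory of $\mathfrak{sl}(2)$-modules that are torsion free as $\mathbb{C}[z]$-modules and of finite rank ($S^{-1}V$ finite-dimensional over $\mathbb{C}(z)$, $S=\mathbb{C}[z]\setminus\{0\}$). $\mathcal R$ is its full subcategory of rational modules, i.e. those which with their $\mathbb{C}[z]$-structure are finite-dimensional $\mathbb{C}(z)$-vector spaces. The rationalization functor sends $(V,\rho)$ to $(S^{-1}V,\rho_{\mathrm{rat}})$ with $\rho_{\mathrm{rat}}(L_{\pm1})(v/p(z))=\rho(L_{\pm1})(v)/p(z\pm1)$ and $\rho_{\mathrm{rat}}(L_0)(v/p(z))=zv/p(z)$, and a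 morphism $\phi$ to $S^{-1}\phi$. *)

From HB Require Import structures.
From mathcomp Require Import all_boot all_order all_algebra.
From mathcomp Require Import reals complex.
From Stdlib Require Import ClassicalEpsilon.

Set Implicit Arguments.
Unset Strict Implicit.
Unset Printing Implicit Defensive.

Import Order.TTheory GRing.Theory Num.Theory.
Local Open Scope ring_scope.

(* sl(2)-modules over a field K, with sl(2) given by a Chevalley basis e,f,h. *)
Section Sl2.
Variable K : fieldType.

Record sl2data := Sl2Data {
  car :> Type;
  vzero : car;
  vadd : car -> car -> car;
  vopp : car -> car;
  vscale : K -> car -> car;
  rho_e : car -> car;
  rho_f : car -> car;
  rho_h : car -> car }.

Definition vsub (M : sl2data) (u v : M) : M := vadd u (vopp v).

Definition K_linear (M N : sl2data) (g : M -> N) : Prop :=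
  (forall u v, g (vadd u v) = vadd (g u) (g v)) /\
  (forall a v, g (vscale a v) = vscale a (g v)).

Definition is_vspace (M : sl2data) : Prop :=
  [/\ associative (@vadd M), commutative (@vadd M),
      left_id (vzero M) (@vadd M) & left_inverse (vzero M) (@vopp M) (@vadd M)] /\
  [/\ (forall a b (v : M), vscale a (vscale b v) = vscale (a * b) v),
      (forall v : M, vscale 1 v = v),
      (forall a, {morph @vscale M a : u v / vadd u v}) &
      (forall v : M, {morph @vscale M ^~ v : a b / a + b >-> vadd a b})].

Definition is_sl2mod (M : sl2data) : Prop :=
  [/\ is_vspace M, K_linear (@rho_e M), K_linear (@rho_f M) & K_linear (@rho_h M)] /\
  [/\ (forall v : M, vsub (rho_e (rho_f v)) (rho_f (rho_e v)) = rho_h v),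
      (forall v : M, vsub (rho_h (rho_e v)) (rho_e (rho_h v)) = vscale 2 (rho_e v)) &
      (forall v : M, vsub (rho_h (rho_f v)) (rho_f (rho_h v)) = vscale (- 2) (rho_f v))].

Definition rhoLm1 (M : sl2data) (v : M) : M := rho_f v.
Definition rhoL0 (M : sl2data) (v : M) : M := vscale (- 2^-1) (rho_h v).
Definition rhoL1 (M : sl2data) (v : M) : M := vopp (rho_e v).

(* The K[z]-module structure: p . v = p(rho(L_0)) v. *)
Definition pact (M : sl2data) (p : {poly K}) (v : M) : M :=
  \big[@vadd M/vzero M]_(i < size p) vscale p`_i (iter i (@rhoL0 M) v).

Definition torsion_free (M : sl2data) : Prop :=
  forall (p : {poly K}) (v : M), p != 0 -> pact p v = vzero M -> v = vzero M.

(* Finite rank: S^{-1}M is finite dimensional over K(z), i.e. finitely many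
   vectors v_1..v_n whose images span S^{-1}M over K(z): every v has a nonzero
   multiple p.v lying in the K[z]-span of v_1..v_n. *)
Definition finite_rank (M : sl2data) : Prop :=
  exists vs : seq M, forall v : M, exists2 p : {poly K}, p != 0 &
    exists cs : seq {poly K}, size cs = size vs /\
      pact p v = \big[@vadd M/vzero M]_(x <- zip cs vs) pact x.1 x.2.

Definition tffr (M : sl2data) : Prop :=
  [/\ is_sl2mod M, torsion_free M & finite_rank M].

(* Objects of the full subcategory R of rational modules: the K[z]-structure
   extends to a (finite dimensional) K(z)-vector space structure, i.e. every
   nonzero polynomial acts bijectively. *)
Definition rational_mod (M : sl2data) : Prop :=
  tffr M /\ forall p : {poly K}, p != 0 -> bijective (pact (M := M) p).

Definition sl2_morphism (M N : sl2data) (g : M -> N) : Prop :=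
  [/\ K_linear g, (forall v, g (rho_e v) = rho_e (g v)),
      (forall v, g (rho_f v) = rho_f (g v)) & (forall v, g (rho_h v) = rho_h (g v))].

(* Rationalization S^{-1}M : fractions v / p (p <> 0) modulo the usual        *)
(* localization relation  v/p ~ w/q  iff  s.(q.v - p.w) = 0 for some s <> 0.  *)
Definition loc_rel (M : sl2data) (x y : M * {poly K}) : Prop :=
  exists2 s : {poly K}, s != 0 & pact s (vsub (pact y.2 x.1) (pact x.2 y.1)) = vzero M.

Definition loc_cls (M : sl2data) (x : M * {poly K}) : M * {poly K} -> Prop :=
  fun y => y.2 != 0 /\ loc_rel x y.

Definition loc_car (M : sl2data) : Type :=
  {P : M * {poly K} -> Prop | exists x : M * {poly K}, x.2 != 0 /\ P = loc_cls x}.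

(* normalize a pair so that its denominator is nonzero (only used on pairs
   with nonzero denominator anyway) *)
Definition nzden (M : sl2data) (x : M * {poly K}) : M * {poly K} :=
  if x.2 == 0 then (x.1, 1) else x.

Lemma nzden_neq0 (M : sl2data) (x : M * {poly K}) : (nzden x).2 != 0.
Proof. rewrite /nzden; case: ifP => [_|/negbT //]; exact: oner_neq0. Qed.

Definition frac (M : sl2data) (x : M * {poly K}) : loc_car M :=
  exist _ (loc_cls (nzden x)) (ex_intro _ (nzden x) (conj (nzden_neq0 x) erefl)).

Definition rep (M : sl2data) (a : loc_car M) : M * {poly K} :=
  proj1_sig (constructive_indefinite_description _ (proj2_sig a)).

Definition shiftp (c : K) (p : {poly K}) : {poly K} := p \Po ('X + c%:P).

Definition rat_data (M : sl2data) : sl2data :=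
  @Sl2Data (loc_car M)
    (frac (vzero M, 1))
    (fun a b => frac (vadd (pact (rep b).2 (rep a).1) (pact (rep a).2 (rep b).1),
                      (rep a).2 * (rep b).2))
    (fun a => frac (vopp (rep a).1, (rep a).2))
    (fun c a => frac (vscale c (rep a).1, (rep a).2))
    (fun a => frac (rho_e (rep a).1, shiftp 1 (rep a).2))
    (fun a => frac (rho_f (rep a).1, shiftp (- 1) (rep a).2))
    (fun a => frac (rho_h (rep a).1, (rep a).2)).

Definition rat_map (M N : sl2data) (g : M -> N) : rat_data M -> rat_data N :=
  fun a => frac (g (rep a).1, (rep a).2).

End Sl2.

From HB Require Import structures.
From mathcomp Require Import all_boot all_order all_algebra.
From mathcomp Require Import reals complex.
From mathcomp Require Import boolp ring.

Set Implicit Arguments.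
Unset Strict Implicit.
Unset Printing Implicit Defensive.

Import Order.TTheory GRing.Theory Num.Theory.
Local Open Scope ring_scope.

(* Since [e L_0 = (L_0 + 1) e] and [f L_0 = (L_0 - 1) f], a polynomial p(L_0)
   satisfies [e p(L_0) = p(L_0 + 1) e] and [f p(L_0) = p(L_0 - 1) f]; this is
   exactly what makes [e (v/p) = e v / p(z+1)] and [f (v/p) = f v / p(z-1)]
   well defined on fractions, so S^{-1}V is an sl(2)-module on which every
   nonzero polynomial acts bijectively.  A morphism g : V -> W into a rational module extends uniquely
   to S^{-1}V by [v/p |-> p^{-1} g(v)], because p acts bijectively on W; for W
   rational, the extension of the identity inverts the unit.  Faithfulness:
   [g1 v / 1 = g2 v / 1] means [s.(g1 v - g2 v) = 0] for some s <> 0, and W is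
   torsion free. *)

Section VectorSpaceCarrier.
Variable K : fieldType.

Definition vspace (M : sl2data K) (HM : is_vspace M) : Type := car M.
HB.instance Definition _ M HM := gen_eqMixin (@vspace M HM).
HB.instance Definition _ M HM := gen_choiceMixin (@vspace M HM).

Section VectorSpaceLaws.
Variables (M : sl2data K) (HM : is_vspace M).

Lemma vaddA : associative (@vadd _ M). Proof. by case: HM => -[]. Qed.
Lemma vaddC : commutative (@vadd _ M). Proof. by case: HM => -[]. Qed.
Lemma vadd0 : left_id (vzero M) (@vadd _ M). Proof. by case: HM => -[]. Qed.
Lemma vaddN : left_inverse (vzero M) (@vopp _ M) (@vadd _ M).
Proof. by case: HM => -[]. Qed.
Lemma vscaleA a b (v : M) : vscale a (vscale b v) = vscale (a * b) v.
Proof. by case: HM => _ []. Qed.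
Lemma vscale1 (v : M) : vscale 1 v = v. Proof. by case: HM => _ []. Qed.
Lemma vscaleDr a : {morph @vscale _ M a : u v / vadd u v}.
Proof. by case: HM => _ []. Qed.
Lemma vscaleDl (v : M) : {morph @vscale _ M ^~ v : a b / a + b >-> vadd a b}.
Proof. by case: HM => _ []. Qed.

End VectorSpaceLaws.

HB.instance Definition _ M HM :=
  GRing.isZmodule.Build (@vspace M HM) (vaddA HM) (vaddC HM) (vadd0 HM) (vaddN HM).
HB.instance Definition _ M HM :=
  GRing.Zmodule_isLmodule.Build K (@vspace M HM)
    (vscaleA HM) (vscale1 HM) (vscaleDr HM) (vscaleDl HM).

End VectorSpaceCarrier.

Section PolyAction.
Variables (K : fieldType) (V : lmodType K).

Definition poly_act (f : V -> V) (p : {poly K}) (v : V) : V :=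
  \sum_(i < size p) p`_i *: iter i f v.

Variable f : V -> V.
Hypotheses (fD : {morph f : u v / u + v}) (fZ : scalable f).
Implicit Types (c : K) (p q : {poly K}) (v : V).

Lemma poly_act_widen n p v : (size p <= n)%N ->
  poly_act f p v = \sum_(i < n) p`_i *: iter i f v.
Proof.
move=> le_pn; rewrite /poly_act (big_ord_widen n (fun i => p`_i *: iter i f v) le_pn).
rewrite big_mkcond; apply: eq_bigr => i _; case: ifP => // /negbT.
by rewrite -leqNgt => le_pi; rewrite nth_default // scale0r.
Qed.

Lemma poly_act0 v : poly_act f 0 v = 0.
Proof. by rewrite /poly_act size_poly0 big_ord0. Qed.

Lemma poly_actD p q v : poly_act f (p + q) v = poly_act f p v + poly_act f q v.
Proof.
rewrite !(@poly_act_widen (maxn (size p) (size q))) ?leq_maxl ?leq_maxr ?size_polyD //.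
by rewrite -big_split; apply: eq_bigr => i _; rewrite coefD scalerDl.
Qed.

Lemma poly_actZ c p v : poly_act f (c *: p) v = c *: poly_act f p v.
Proof.
rewrite !(@poly_act_widen (size p)) ?size_scale_leq // scaler_sumr.
by apply: eq_bigr => i _; rewrite coefZ scalerA.
Qed.

Lemma poly_actC c v : poly_act f c%:P v = c *: v.
Proof. by rewrite (@poly_act_widen 1) ?size_polyC_leq1 // big_ord1 coefC. Qed.

Lemma poly_act1 v : poly_act f 1 v = v.
Proof. by rewrite poly_actC scale1r. Qed.

Lemma poly_actMX p v : poly_act f (p * 'X) v = poly_act f p (f v).
Proof.
rewrite (@poly_act_widen (size p).+1); last first.
  by apply: leq_trans (size_polyMleq _ _) _; rewrite size_polyX addn2.
rewrite big_ord_recl coefMX /= scale0r add0r /poly_act.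
by apply: eq_bigr => i _; rewrite coefMX /= add0n -iterSr.
Qed.

Lemma poly_act_XaddC c v : poly_act f ('X + c%:P) v = f v + c *: v.
Proof. by rewrite poly_actD -(mul1r 'X) poly_actMX poly_act1 poly_actC. Qed.

Lemma poly_actDr p : {morph poly_act f p : u v / u + v}.
Proof.
have iterD i : {morph iter i f : u v / u + v} by elim: i => // i IH u v; rewrite /= IH fD.
by move=> u v; rewrite /poly_act -big_split; apply: eq_bigr => i _; rewrite iterD scalerDr.
Qed.

Lemma poly_actZr p : scalable (poly_act f p).
Proof.
have iterZ i : scalable (iter i f) by elim: i => // i IH a v; rewrite /= IH fZ.
move=> a v; rewrite /poly_act scaler_sumr; apply: eq_bigr => i _.
by rewrite iterZ !scalerA mulrC.
Qed.

Lemma poly_act_comm p v : f (poly_act f p v) = poly_act f p (f v).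
Proof.
have f0 : f 0 = 0 by rewrite -(scale0r 0) fZ !scale0r.
rewrite /poly_act (big_morph f fD f0); apply: eq_bigr => i _.
by rewrite fZ -iterSr.
Qed.

Lemma poly_actM p q v : poly_act f (p * q) v = poly_act f p (poly_act f q v).
Proof.
elim/poly_ind: p v => [|p c IH] v; first by rewrite mul0r !poly_act0.
rewrite mulrDl mulrAC poly_actD poly_actMX IH -poly_act_comm mul_polyC poly_actZ.
by rewrite poly_actD poly_actMX poly_actC.
Qed.

End PolyAction.

Section PolyActionIntertwining.
Variables (K : fieldType) (V W : lmodType K) (f : V -> V) (f' : W -> W) (g : V -> W).
Hypotheses (f'D : {morph f' : u v / u + v}) (f'Z : scalable f').
Hypotheses (gD : {morph g : u v / u + v}) (gZ : scalable g).
Implicit Types (c : K) (p : {poly K}) (v : V).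

Lemma poly_act_intertwine_shift c : (forall v, g (f v) = f' (g v) + c *: g v) ->
  forall p v, g (poly_act f p v) = poly_act f' (shiftp c p) (g v).
Proof.
move=> gf p; have g0 : g 0 = 0 by rewrite -(scale0r 0) gZ !scale0r.
elim/poly_ind: p => [|p a IH] v; first by rewrite /shiftp comp_poly0 !poly_act0 g0.
rewrite poly_actD poly_actMX poly_actC gD IH gZ gf /shiftp.
rewrite comp_polyD comp_polyM comp_polyX comp_polyC poly_actD poly_actC.
by rewrite poly_actM // poly_act_XaddC.
Qed.

Lemma poly_act_intertwine : (forall v, g (f v) = f' (g v)) ->
  forall p v, g (poly_act f p v) = poly_act f' p (g v).
Proof.
move=> gf p v; have := @poly_act_intertwine_shift 0 _ p v.
rewrite /shiftp polyC0 addr0 comp_polyXr; apply=> w.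
by rewrite scale0r addr0.
Qed.

End PolyActionIntertwining.

Section Shift.
Variable K : fieldType.
Implicit Types (c : K) (p q : {poly K}).

Lemma shiftp_eq0 c p : (shiftp c p == 0) = (p == 0).
Proof. by rewrite /shiftp comp_poly_eq0 // size_XaddC. Qed.

Lemma shiftp_neq0 c p : p != 0 -> shiftp c p != 0.
Proof. by rewrite shiftp_eq0. Qed.

Lemma shiftpM c p q : shiftp c (p * q) = shiftp c p * shiftp c q.
Proof. exact: comp_polyM. Qed.

Lemma shiftp1 c : shiftp c 1 = 1 :> {poly K}.
Proof. by rewrite /shiftp -polyC1 comp_polyC. Qed.

Lemma shiftp0 p : shiftp 0 p = p.
Proof. by rewrite /shiftp polyC0 addr0 comp_polyXr. Qed.

Lemma shiftpD c c' p : shiftp c (shiftp c' p) = shiftp (c + c') p.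
Proof.
by rewrite /shiftp -comp_polyA comp_polyD comp_polyX comp_polyC -addrA -polyCD.
Qed.

End Shift.

Lemma sl2_vspace (K : fieldType) (M : sl2data K) : is_sl2mod M -> is_vspace M.
Proof. by case=> -[]. Qed.

Section Sl2Module.
Variables (K : fieldType) (two : (2 : K) != 0) (M : sl2data K) (HM : is_sl2mod M).
Local Notation V := (vspace (sl2_vspace HM)).
Implicit Types (p q : {poly K}).

Lemma vaddE (u v : V) : vadd u v = u + v :> V. Proof. by []. Qed.
Lemma vscaleE a (v : V) : vscale a v = a *: v :> V. Proof. by []. Qed.
Lemma voppE (v : V) : vopp v = - v :> V. Proof. by []. Qed.
Lemma vsubE (u v : V) : vsub u v = u - v :> V. Proof. by []. Qed.
Lemma vzeroE : vzero M = 0 :> V. Proof. by []. Qed.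
Lemma eq_in_vspace (u v : M) : u = v -> u = v :> V. Proof. by []. Qed.
Lemma eq_of_vspace (u v : M) : u = v :> V -> u = v. Proof. by []. Qed.

Lemma rho_eD (u v : V) : rho_e (u + v) = (rho_e u : V) + (rho_e v : V) :> V.
Proof. by have [[_ [eD _] _ _] _] := HM; apply: eD. Qed.
Lemma rho_eZ a (v : V) : rho_e (a *: v) = a *: (rho_e v : V) :> V.
Proof. by have [[_ [_ eZ] _ _] _] := HM; apply: eZ. Qed.
Lemma rho_fD (u v : V) : rho_f (u + v) = (rho_f u : V) + (rho_f v : V) :> V.
Proof. by have [[_ _ [fD _] _] _] := HM; apply: fD. Qed.
Lemma rho_fZ a (v : V) : rho_f (a *: v) = a *: (rho_f v : V) :> V.
Proof. by have [[_ _ [_ fZ] _] _] := HM; apply: fZ. Qed.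
Lemma rho_hD (u v : V) : rho_h (u + v) = (rho_h u : V) + (rho_h v : V) :> V.
Proof. by have [[_ _ _ [hD _]] _] := HM; apply: hD. Qed.
Lemma rho_hZ a (v : V) : rho_h (a *: v) = a *: (rho_h v : V) :> V.
Proof. by have [[_ _ _ [_ hZ]] _] := HM; apply: hZ. Qed.

Lemma rho_ef (v : V) : (rho_e (rho_f v) : V) - (rho_f (rho_e v) : V) = rho_h v :> V.
Proof. by have [_ [ef _ _]] := HM; apply: ef. Qed.
Lemma rho_he (v : V) :
  (rho_h (rho_e v) : V) - (rho_e (rho_h v) : V) = 2 *: (rho_e v : V) :> V.
Proof. by have [_ [_ he _]] := HM; apply: he. Qed.
Lemma rho_hf (v : V) :
  (rho_h (rho_f v) : V) - (rho_f (rho_h v) : V) = (- 2) *: (rho_f v : V) :> V.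
Proof. by have [_ [_ _ hf]] := HM; apply: hf. Qed.

Local Notation L0 := (@rhoL0 K M : V -> V).

Lemma rhoL0D : {morph L0 : u v / u + v}.
Proof. by move=> u v; rewrite /rhoL0 !vscaleE rho_hD scalerDr. Qed.
Lemma rhoL0Z : scalable L0.
Proof. by move=> a v; rewrite /rhoL0 !vscaleE rho_hZ !scalerA mulrC. Qed.

Lemma rho_e_L0 (v : V) : rho_e (L0 v) = L0 (rho_e v) + 1 *: (rho_e v : V) :> V.
Proof.
have eh : rho_e (rho_h v) = (rho_h (rho_e v) : V) - 2 *: (rho_e v : V) :> V.
  by rewrite -rho_he opprB addrC subrK.
rewrite /rhoL0 !vscaleE rho_eZ eh scalerBr scalerA mulNr mulVf //.
by rewrite scaleN1r opprK scale1r.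
Qed.

Lemma rho_f_L0 (v : V) : rho_f (L0 v) = L0 (rho_f v) + (- 1) *: (rho_f v : V) :> V.
Proof.
have fh : rho_f (rho_h v) = (rho_h (rho_f v) : V) + 2 *: (rho_f v : V) :> V.
  by rewrite -(opprK (2 *: (rho_f v : V))) -scaleNr -rho_hf opprB addrC subrK.
by rewrite /rhoL0 !vscaleE rho_fZ fh scalerDr scalerA mulNr mulVf // scaleN1r.
Qed.

Lemma pact_poly_act p (v : M) : pact p v = poly_act L0 p v. Proof. by []. Qed.

Lemma pactM p q (v : V) : pact (p * q) v = pact p (pact q v) :> V.
Proof. exact: (poly_actM rhoL0D rhoL0Z). Qed.
Lemma pact_comm p q (v : V) : pact p (pact q v) = pact q (pact p v) :> V.
Proof. by rewrite -!pactM mulrC. Qed.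
Lemma pact1 (v : V) : pact 1 v = v :> V.
Proof. exact: poly_act1. Qed.
Lemma pactDr p (u v : V) : pact p (u + v) = (pact p u : V) + (pact p v : V) :> V.
Proof. exact: (poly_actDr rhoL0D). Qed.
Lemma pactZr p a (v : V) : pact p (a *: v) = a *: (pact p v : V) :> V.
Proof. exact: (poly_actZr rhoL0Z). Qed.
Lemma pact0r p : pact p (0 : V) = 0 :> V.
Proof. by rewrite -(scale0r (0 : V)) pactZr !scale0r. Qed.
Lemma pactNr p (v : V) : pact p (- v) = - (pact p v : V) :> V.
Proof. by rewrite -scaleN1r pactZr scaleN1r. Qed.
Lemma pactBr p (u v : V) : pact p (u - v) = (pact p u : V) - (pact p v : V) :> V.
Proof. by rewrite pactDr pactNr. Qed.
Lemma pact_eqp p q (v : V) : p = q -> pact p v = pact q v :> V.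
Proof. by move->. Qed.

Lemma rho_e_pact p (v : V) : rho_e (pact p v) = pact (shiftp 1 p) (rho_e v) :> V.
Proof. exact: (poly_act_intertwine_shift rhoL0D rhoL0Z rho_eD rho_eZ rho_e_L0). Qed.

Lemma rho_f_pact p (v : V) : rho_f (pact p v) = pact (shiftp (- 1) p) (rho_f v) :> V.
Proof. exact: (poly_act_intertwine_shift rhoL0D rhoL0Z rho_fD rho_fZ rho_f_L0). Qed.

Lemma rho_h_pact p (v : V) : rho_h (pact p v) = pact p (rho_h v) :> V.
Proof.
apply: (poly_act_intertwine rhoL0D rhoL0Z rho_hD rho_hZ) => w.
by rewrite /rhoL0 !vscaleE rho_hZ.
Qed.

End Sl2Module.

Arguments eq_in_vspace {K M} HM [u v].
Arguments eq_of_vspace {K M} HM [u v].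

Lemma sig_eq (A : Type) (P : A -> Prop) (a b : sig P) : sval a = sval b -> a = b.
Proof. by case: a b => a Pa [b Pb] /= ab; apply: eq_exist. Qed.

Definition expand (K : fieldType) (M : sl2data K) (q : {poly K}) (x : M * {poly K}) :=
  (pact q x.1, q * x.2).

Section Localization.
Variables (K : fieldType) (M : sl2data K) (HM : is_sl2mod M).
Local Notation V := (vspace (sl2_vspace HM)).
Local Notation pr := (car M * {poly K})%type.
Implicit Types (x y z : pr) (p q d : {poly K}).

Lemma loc_relE x y : loc_rel x y <->
  exists2 s : {poly K}, s != 0 & pact (s * y.2) x.1 = pact (s * x.2) y.1 :> V.
Proof.
rewrite /loc_rel; split=> -[s s_neq0 E]; exists s => //.
  by move/(eq_in_vspace HM): E; rewrite vsubE pactBr vzeroE => /subr0_eq; rewrite -!pactM.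
by apply: (eq_of_vspace HM); rewrite vsubE pactBr -!pactM E subrr.
Qed.

Lemma loc_rel_refl x : loc_rel x x.
Proof. by apply/loc_relE; exists 1; rewrite ?oner_neq0. Qed.

Lemma loc_rel_sym x y : loc_rel x y -> loc_rel y x.
Proof. by move=> /loc_relE [s s_neq0 E]; apply/loc_relE; exists s. Qed.

Lemma loc_rel_trans y x z : y.2 != 0 -> loc_rel x y -> loc_rel y z -> loc_rel x z.
Proof.
move=> y2 /loc_relE [s s_neq0 Exy] /loc_relE [t t_neq0 Eyz].
apply/loc_relE; exists (s * t * y.2); first by rewrite !mulf_neq0.
rewrite (@pact_eqp _ _ HM _ ((t * z.2) * (s * y.2))); last by ring.
rewrite pactM Exy pact_comm Eyz -pactM.
by apply: pact_eqp; ring.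
Qed.

Lemma nzdenE x : x.2 != 0 -> nzden x = x.
Proof. by rewrite /nzden => /negbTE ->. Qed.

Lemma frac_eqP x y : x.2 != 0 -> y.2 != 0 -> frac x = frac y <-> loc_rel x y.
Proof.
move=> x2 y2; split.
  move=> /(f_equal sval) /=; rewrite !nzdenE // => E.
  have : loc_cls y y by split; [|apply: loc_rel_refl].
  by rewrite -E => -[].
move=> rxy; apply: sig_eq => /=; rewrite !nzdenE //.
apply/funext => z; apply/propext; rewrite /loc_cls; split=> -[z2 r]; split=> //.
  exact: loc_rel_trans (loc_rel_sym rxy) r.
exact: loc_rel_trans rxy r.
Qed.

Lemma rep_spec (a : loc_car M) : (rep a).2 != 0 /\ sval a = loc_cls (rep a).
Proof. exact: proj2_sig (ClassicalEpsilon.constructive_indefinite_description _ (proj2_sig a)). Qed.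

Lemma rep_neq0 (a : loc_car M) : (rep a).2 != 0.
Proof. by case: (rep_spec a). Qed.

Lemma frac_rep (a : loc_car M) : frac (rep a) = a.
Proof. by apply: sig_eq => /=; rewrite nzdenE ?rep_neq0 //; case: (rep_spec a). Qed.

Lemma rep_frac x : x.2 != 0 -> loc_rel (rep (frac x)) x.
Proof. by move=> x2; apply/frac_eqP; rewrite ?rep_neq0 ?frac_rep. Qed.

Lemma frac_expand q x : q != 0 -> x.2 != 0 -> frac (expand q x) = frac x.
Proof.
move=> q_neq0 x2; apply/frac_eqP; rewrite /= ?mulf_neq0 //.
apply/loc_relE; exists 1; rewrite ?oner_neq0 //= -pactM.
by apply: pact_eqp; ring.
Qed.

Lemma rep_frac_expand x : x.2 != 0 ->
  exists p q, [/\ p != 0, q != 0 & expand p (rep (frac x)) = expand q x].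
Proof.
move=> x2; have [s s_neq0 E] := (loc_relE _ _).1 (rep_frac x2); have r2 := rep_neq0 (frac x).
exists (s * x.2), (s * (rep (frac x)).2); split; rewrite ?mulf_neq0 //.
by rewrite /expand E; congr (_, _); ring.
Qed.

Lemma frac_common_den q d x : q != 0 -> x.2 != 0 -> q * x.2 = d ->
  frac x = frac (pact q x.1, d).
Proof. by move=> q_neq0 x2 <-; rewrite -(frac_expand q_neq0 x2). Qed.

Lemma frac0 d : d != 0 -> frac (vzero M, d) = frac (vzero M, 1).
Proof.
move=> d_neq0; apply/frac_eqP; rewrite ?oner_neq0 //; apply/loc_relE.
by exists 1; rewrite ?oner_neq0 //= vzeroE !pact0r.
Qed.

Lemma frac_eq_den [d] [u w : M] : d != 0 ->
  frac (u, d) = frac (w, d) <-> exists2 s : {poly K}, s != 0 & pact s u = pact s w :> V.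
Proof.
move=> d_neq0; split.
  move/(frac_eqP (x := (u, d)) (y := (w, d)) d_neq0 d_neq0)/loc_relE => -[s s_neq0 E].
  by exists (s * d); rewrite ?mulf_neq0.
move=> [s s_neq0 E]; apply/frac_eqP => //; apply/loc_relE; exists s => //=.
by rewrite mulrC !pactM E.
Qed.

Lemma frac_ind (P : loc_car M -> Prop) :
  (forall x, x.2 != 0 -> P (frac x)) -> forall a, P a.
Proof. by move=> Pfrac a; rewrite -(frac_rep a); apply/Pfrac/rep_neq0. Qed.

Lemma frac_ind2 (P : loc_car M -> loc_car M -> Prop) :
  (forall d u w, d != 0 -> P (frac (u, d)) (frac (w, d))) -> forall a b, P a b.
Proof.
move=> Pfrac a b; rewrite -(frac_rep a) -(frac_rep b).
have [x2 y2] := (rep_neq0 a, rep_neq0 b).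
set x := rep a; set y := rep b; set d := x.2 * y.2.
rewrite (@frac_common_den y.2 d x) ?(@frac_common_den x.2 d y) //; last by rewrite mulrC.
by apply: Pfrac; rewrite mulf_neq0.
Qed.

Lemma frac_ind3 (P : loc_car M -> loc_car M -> loc_car M -> Prop) :
  (forall d u v w, d != 0 -> P (frac (u, d)) (frac (v, d)) (frac (w, d))) ->
  forall a b c, P a b c.
Proof.
move=> Pfrac a b c; rewrite -(frac_rep a) -(frac_rep b) -(frac_rep c).
have [[x2 y2] z2] := (rep_neq0 a, rep_neq0 b, rep_neq0 c).
set x := rep a; set y := rep b; set z := rep c; set d := x.2 * y.2 * z.2.
rewrite (@frac_common_den (y.2 * z.2) d x) ?mulf_neq0 //; last by rewrite /d; ring.
rewrite (@frac_common_den (x.2 * z.2) d y) ?mulf_neq0 //; last by rewrite /d; ring.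
rewrite (@frac_common_den (x.2 * y.2) d z) ?mulf_neq0 //.
by apply: Pfrac; rewrite !mulf_neq0.
Qed.

End Localization.

(* The operations of [rat_data] act on the chosen representatives [rep]; an
   operation on pairs that commutes with expanding fractions therefore gives
   the same class on every representative. *)
Lemma frac_rep_compat (K : fieldType) (M N : sl2data K) (HM : is_sl2mod M)
    (HN : is_sl2mod N) (O : M * {poly K} -> N * {poly K}) (phi : {poly K} -> {poly K}) :
  (forall q, q != 0 -> phi q != 0) -> (forall x, x.2 != 0 -> (O x).2 != 0) ->
  (forall q x, O (expand q x) = expand (phi q) (O x)) ->
  forall x, x.2 != 0 -> frac (O (rep (frac x))) = frac (O x).
Proof.
move=> phi_neq0 O_neq0 O_expand x x2; have [p [q [p_neq0 q_neq0 E]]] := rep_frac_expand HM x2.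
rewrite -(frac_expand HN (phi_neq0 _ p_neq0) (O_neq0 _ (rep_neq0 _))) -O_expand E.
by rewrite O_expand frac_expand ?phi_neq0 ?O_neq0.
Qed.

Section RationalizationOperations.
Variables (K : fieldType) (two : (2 : K) != 0) (M : sl2data K) (HM : is_sl2mod M).
Local Notation pr := (car M * {poly K})%type.
Local Notation Q := (rat_data M).
Implicit Types (x y : pr) (d : {poly K}).

Lemma frac_add x y : x.2 != 0 -> y.2 != 0 ->
  @vadd _ Q (frac x) (frac y) = frac (vadd (pact y.2 x.1) (pact x.2 y.1), x.2 * y.2).
Proof.
pose sum (x y : pr) := (vadd (pact y.2 x.1) (pact x.2 y.1), x.2 * y.2).
have sum_expand p q x' y' : sum (expand p x') (expand q y') = expand (p * q) (sum x' y').
  rewrite /sum /expand /=; congr (_, _); last by ring.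
  apply: (eq_of_vspace HM); rewrite !vaddE pactDr -!pactM.
  by congr (_ + _); apply: pact_eqp; ring.
move=> x2 y2; change (frac (sum (rep (frac x)) (rep (frac y))) = frac (sum x y)).
have [p [q [p_neq0 q_neq0 Ex]]] := rep_frac_expand HM x2.
have [p' [q' [p'_neq0 q'_neq0 Ey]]] := rep_frac_expand HM y2.
have rep2 : (sum (rep (frac x)) (rep (frac y))).2 != 0 by rewrite mulf_neq0 ?rep_neq0.
rewrite -(frac_expand HM (mulf_neq0 p_neq0 p'_neq0) rep2) -sum_expand Ex Ey.
by rewrite sum_expand frac_expand ?mulf_neq0.
Qed.

Lemma fracD d u w : d != 0 -> @vadd _ Q (frac (u, d)) (frac (w, d)) = frac (vadd u w, d).
Proof.
move=> d_neq0; rewrite frac_add // -(frac_expand HM d_neq0 (x := (vadd u w, d))) //.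
by rewrite /expand /=; congr (frac (_, _)); apply: (eq_of_vspace HM); rewrite !vaddE pactDr.
Qed.

Lemma fracN x : x.2 != 0 -> @vopp _ Q (frac x) = frac (vopp x.1, x.2).
Proof.
apply: (frac_rep_compat HM HM (O := fun z => (vopp z.1, z.2)) (phi := id)) => // q z.
by rewrite /expand /=; congr (_, _); apply: (eq_of_vspace HM); rewrite !voppE pactNr.
Qed.

Lemma fracZ c x : x.2 != 0 -> @vscale _ Q c (frac x) = frac (vscale c x.1, x.2).
Proof.
apply: (frac_rep_compat HM HM (O := fun z => (vscale c z.1, z.2)) (phi := id)) => // q z.
by rewrite /expand /=; congr (_, _); apply: (eq_of_vspace HM); rewrite !vscaleE pactZr.
Qed.

Lemma fracB d u w : d != 0 -> @vsub _ Q (frac (u, d)) (frac (w, d)) = frac (vsub u w, d).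
Proof. by move=> d_neq0; rewrite /vsub fracN // fracD. Qed.

Lemma frac_rho_e x : x.2 != 0 -> @rho_e _ Q (frac x) = frac (rho_e x.1, shiftp 1 x.2).
Proof.
apply: (frac_rep_compat HM HM (O := fun z => (rho_e z.1, shiftp 1 z.2))
  (phi := shiftp 1)) => [q|z|q z]; rewrite ?shiftp_eq0 //.
by rewrite /expand /= shiftpM; congr (_, _); apply: (eq_of_vspace HM); rewrite rho_e_pact.
Qed.

Lemma frac_rho_f x : x.2 != 0 -> @rho_f _ Q (frac x) = frac (rho_f x.1, shiftp (- 1) x.2).
Proof.
apply: (frac_rep_compat HM HM (O := fun z => (rho_f z.1, shiftp (- 1) z.2))
  (phi := shiftp (- 1))) => [q|z|q z]; rewrite ?shiftp_eq0 //.
by rewrite /expand /= shiftpM; congr (_, _); apply: (eq_of_vspace HM); rewrite rho_f_pact.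
Qed.

Lemma frac_rho_h x : x.2 != 0 -> @rho_h _ Q (frac x) = frac (rho_h x.1, x.2).
Proof.
apply: (frac_rep_compat HM HM (O := fun z => (rho_h z.1, z.2)) (phi := id)) => // q z.
by rewrite /expand /=; congr (_, _); apply: (eq_of_vspace HM); rewrite rho_h_pact.
Qed.

Lemma frac_iter_L0 i x : x.2 != 0 ->
  iter i (@rhoL0 _ Q) (frac x) = frac (iter i (@rhoL0 _ M) x.1, x.2).
Proof.
move=> x2; elim: i => [|i IH]; first by case: x x2.
by rewrite !iterS IH /rhoL0 frac_rho_h // fracZ.
Qed.

Lemma pact_frac p x : x.2 != 0 -> @pact _ Q p (frac x) = frac (pact p x.1, x.2).
Proof.
have frac_sum n (F : 'I_n -> M) d : d != 0 ->
    \big[@vadd _ Q/vzero Q]_(i < n) frac (F i, d) = frac (\big[@vadd _ M/vzero M]_(i < n) F i, d).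
  move=> d_neq0; elim: n F => [|n IH] F; first by rewrite !big_ord0 frac0.
  by rewrite !big_ord_recl IH fracD.
move=> x2; rewrite /pact; under eq_bigr => i _ do rewrite frac_iter_L0 // fracZ //.
exact: frac_sum.
Qed.

Lemma pact_frac_den x : x.2 != 0 -> @pact _ Q x.2 (frac x) = frac (x.1, 1).
Proof.
move=> x2; rewrite pact_frac // -(frac_expand HM x2 (x := (x.1, 1))) ?oner_neq0 //.
by rewrite /expand mulr1.
Qed.

End RationalizationOperations.

Lemma frac_lift_linear (K : fieldType) (M N : sl2data K) (HM : is_sl2mod M)
    (HN : is_sl2mod N) (T : rat_data M -> rat_data N) (t : M -> N)
    (s : {poly K} -> {poly K}) :
  K_linear t -> (forall d, d != 0 -> s d != 0) ->
  (forall u d, d != 0 -> T (frac (u, d)) = frac (t u, s d)) -> K_linear T.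
Proof.
move=> [tD tZ] s_neq0 Tfrac; split.
  apply: (frac_ind2 HM) => d u w d_neq0.
  by rewrite fracD // !Tfrac // tD fracD ?s_neq0.
move=> c; apply: frac_ind => -[u d] d_neq0.
by rewrite fracZ // !Tfrac // tZ fracZ ?s_neq0.
Qed.

Definition rat_unit (K : fieldType) (M : sl2data K) (v : M) : rat_data M := frac (v, 1).

Section RationalModule.
Variables (K : fieldType) (two : (2 : K) != 0) (M : sl2data K) (HM : is_sl2mod M).
Local Notation HV := (sl2_vspace HM).
Local Notation pr := (car M * {poly K})%type.
Local Notation Q := (rat_data M).

Lemma rat_vspace : is_vspace Q.
Proof.
split; split.
- rewrite /associative; apply: (frac_ind3 HM) => d u v w d_neq0.
  by rewrite !fracD // (vaddA HV).
- rewrite /commutative; apply: (frac_ind2 HM) => d u w d_neq0.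
  by rewrite !fracD // (vaddC HV).
- rewrite /left_id; apply: frac_ind => -[u d] d_neq0.
  by rewrite -[vzero _](frac0 HM d_neq0) fracD // (vadd0 HV).
- rewrite /left_inverse; apply: frac_ind => -[u d] d_neq0.
  by rewrite fracN // fracD // (vaddN HV) frac0.
- move=> a b; apply: frac_ind => -[u d] d_neq0.
  by rewrite !fracZ // (vscaleA HV).
- by apply: frac_ind => -[u d] d_neq0; rewrite fracZ // (vscale1 HV).
- move=> c; apply: (frac_ind2 HM) => d u w d_neq0.
  by rewrite fracD // !fracZ // fracD // (vscaleDr HV).
- apply: frac_ind => -[u d] d_neq0 a b.
  by rewrite !fracZ // fracD // (vscaleDl HV).
Qed.

Lemma rat_sl2 : is_sl2mod Q.
Proof.
have [_ eL fL hL] := HM.1.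
split; split.
- exact: rat_vspace.
- apply: (frac_lift_linear HM HM eL (s := shiftp 1)) => [d|u d d_neq0].
    exact: shiftp_neq0.
  exact: frac_rho_e.
- apply: (frac_lift_linear HM HM fL (s := shiftp (- 1))) => [d|u d d_neq0].
    exact: shiftp_neq0.
  exact: frac_rho_f.
- by apply: (frac_lift_linear HM HM hL (s := id)) => // u d d_neq0; apply: frac_rho_h.
- apply: frac_ind => x x2.
  rewrite frac_rho_f // frac_rho_e ?shiftp_neq0 // frac_rho_e // frac_rho_f ?shiftp_neq0 //.
  rewrite !shiftpD subrr addrC subrr !shiftp0 fracB // frac_rho_h //.
  by congr (frac (_, _)); apply: (eq_of_vspace HM); rewrite vsubE rho_ef.
- apply: frac_ind => x x2.
  rewrite frac_rho_e // frac_rho_h ?shiftp_neq0 // frac_rho_h // frac_rho_e //.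
  rewrite fracB ?shiftp_neq0 // fracZ ?shiftp_neq0 //.
  by congr (frac (_, _)); apply: (eq_of_vspace HM); rewrite vsubE rho_he.
- apply: frac_ind => x x2.
  rewrite frac_rho_f // frac_rho_h ?shiftp_neq0 // frac_rho_h // frac_rho_f //.
  rewrite fracB ?shiftp_neq0 // fracZ ?shiftp_neq0 //.
  by congr (frac (_, _)); apply: (eq_of_vspace HM); rewrite vsubE rho_hf.
Qed.

Lemma rat_torsion_free : torsion_free Q.
Proof.
move=> p + p_neq0; apply: frac_ind => -[u d] d_neq0.
rewrite pact_frac // -[vzero _](frac0 HM d_neq0) => /(frac_eq_den HM d_neq0) [s s_neq0 E].
apply/(frac_eq_den HM d_neq0); exists (s * p); first by rewrite mulf_neq0.
by rewrite !pactM E vzeroE !pact0r.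
Qed.

Lemma rat_finite_rank : finite_rank M -> finite_rank Q.
Proof.
move=> [vs span_vs]; exists [seq rat_unit v | v <- vs].
apply: frac_ind => x x2; have [p p_neq0 [cs [size_cs E]]] := span_vs x.1.
exists (p * x.2); first by rewrite mulf_neq0.
exists cs; split; first by rewrite size_map.
have -> : @pact _ Q (p * x.2) (frac x) = frac (pact p x.1, 1).
  rewrite pact_frac // (@frac_common_den _ _ HM x.2 x.2 (pact p x.1, 1)) ?oner_neq0 ?mulr1 //.
  by rewrite mulrC pactM.
have -> : zip cs [seq rat_unit v | v <- vs] = [seq (c.1, rat_unit c.2) | c <- zip cs vs].
  by elim: cs vs {size_cs E span_vs} => [|c cs IH] [|v vs] //=; rewrite IH.
rewrite E big_map; elim: (zip cs vs) => [|c s IH]; first by rewrite !big_nil.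
by rewrite !big_cons -IH /rat_unit pact_frac ?oner_neq0 // fracD ?oner_neq0.
Qed.

Lemma rat_pact_bij p : p != 0 -> bijective (@pact _ Q p).
Proof.
move=> p_neq0; pose div (a : Q) : Q := frac ((rep a).1, p * (rep a).2).
have divE (x : pr) : x.2 != 0 -> div (frac x) = frac (x.1, p * x.2).
  apply: (frac_rep_compat HM HM (O := fun z => (z.1, p * z.2)) (phi := id)) => //.
    by move=> z z2; rewrite mulf_neq0.
  by move=> q z; rewrite /expand /=; congr (_, _); ring.
have frac_div (x : pr) : x.2 != 0 -> frac (pact p x.1, p * x.2) = frac x.
  exact: (frac_expand HM p_neq0 (x := x)).
exists div; apply: frac_ind => x x2.
  by rewrite pact_frac // divE //= frac_div.
by rewrite divE // pact_frac ?mulf_neq0 //= frac_div.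
Qed.

End RationalModule.

Lemma rat_rational (K : fieldType) (two : (2 : K) != 0) (M : sl2data K) :
  tffr M -> rational_mod (rat_data M).
Proof.
case=> HM _ fr_M; split; last exact: rat_pact_bij HM.
split; [exact: (rat_sl2 two HM) | exact: (rat_torsion_free HM) | exact: rat_finite_rank].
Qed.

Section RationalizationFunctor.
Variables (K : fieldType) (two : (2 : K) != 0) (M N : sl2data K).
Variables (HM : is_sl2mod M) (HN : is_sl2mod N) (g : M -> N) (Hg : sl2_morphism g).
Local Notation VM := (vspace (sl2_vspace HM)).
Local Notation VN := (vspace (sl2_vspace HN)).

Lemma morph_pact p (v : M) : g (pact p v) = pact p (g v).
Proof.
have [[gD gZ] _ _ g_h] := Hg; rewrite (pact_poly_act HM) (pact_poly_act HN).
apply: (@poly_act_intertwine _ VM VN _ _ g (@rhoL0D _ _ HN) (@rhoL0Z _ _ HN) gD gZ) => w.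
by rewrite /rhoL0 gZ g_h.
Qed.

Lemma rat_map_frac (x : M * {poly K}) : x.2 != 0 -> rat_map g (frac x) = frac (g x.1, x.2).
Proof.
apply: (frac_rep_compat HM HN (O := fun z => (g z.1, z.2)) (phi := id)) => // q z.
by rewrite /expand /= morph_pact.
Qed.

Lemma rat_map_morph : sl2_morphism (rat_map g).
Proof.
have [gL g_e g_f g_h] := Hg.
split; first by apply: (frac_lift_linear HM HN gL (s := id)) => // u d d_neq0; apply: rat_map_frac.
- apply: frac_ind => x x2.
  by rewrite frac_rho_e // !rat_map_frac ?shiftp_neq0 // frac_rho_e // g_e.
- apply: frac_ind => x x2.
  by rewrite frac_rho_f // !rat_map_frac ?shiftp_neq0 // frac_rho_f // g_f.
- apply: frac_ind => x x2.
  by rewrite frac_rho_h // !rat_map_frac // frac_rho_h // g_h.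
Qed.

Lemma rat_map_unit (v : M) : rat_map g (rat_unit v) = rat_unit (g v).
Proof. by rewrite rat_map_frac ?oner_neq0. Qed.

End RationalizationFunctor.

Lemma rat_unit_morph (K : fieldType) (two : (2 : K) != 0) (M : sl2data K)
  (HM : is_sl2mod M) : sl2_morphism (@rat_unit K M).
Proof.
rewrite /rat_unit; split; first split.
- by move=> u v; rewrite fracD ?oner_neq0.
- by move=> c v; rewrite fracZ ?oner_neq0.
- by move=> v; rewrite frac_rho_e ?oner_neq0 // shiftp1.
- by move=> v; rewrite frac_rho_f ?oner_neq0 // shiftp1.
- by move=> v; rewrite frac_rho_h ?oner_neq0.
Qed.

Section RationalModuleFacts.
Variables (K : fieldType) (W : sl2data K) (HW : rational_mod W).

Lemma rational_sl2 : is_sl2mod W.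
Proof. by case: HW => -[]. Qed.

Lemma rational_pact_inj p : p != 0 -> injective (@pact _ W p).
Proof. by move=> p_neq0; apply/bij_inj/HW.2. Qed.

Lemma rational_pact_surj p (w : W) : p != 0 -> exists u, pact p u = w.
Proof. by move=> p_neq0; have [pinv _ pK] := HW.2 p p_neq0; exists (pinv w). Qed.

End RationalModuleFacts.

Section UniversalProperty.
Variables (K : fieldType) (two : (2 : K) != 0) (M N : sl2data K).
Variables (HM : is_sl2mod M) (HN : rational_mod N) (g : M -> N) (Hg : sl2_morphism g).
Let HNsl2 : is_sl2mod N := rational_sl2 HN.

Definition rat_lift (a : rat_data M) : N :=
  sval (cid (rational_pact_surj HN (g (rep a).1) (rep_neq0 a))).

Lemma rat_lift_rep (a : rat_data M) : pact (rep a).2 (rat_lift a) = g (rep a).1.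
Proof. exact: svalP (cid (rational_pact_surj HN (g (rep a).1) (rep_neq0 a))). Qed.

Lemma rat_lift_frac (x : M * {poly K}) : x.2 != 0 -> pact x.2 (rat_lift (frac x)) = g x.1.
Proof.
move=> x2; have [p [q [p_neq0 q_neq0 [E1 E2]]]] := rep_frac_expand HM x2.
apply: (rational_pact_inj HN q_neq0).
rewrite -(morph_pact HM HNsl2 Hg) -E1 (morph_pact HM HNsl2 Hg) -rat_lift_rep.
by apply: (eq_of_vspace HNsl2); rewrite -!(@pactM _ _ HNsl2) E2.
Qed.

Lemma rat_lift_fracE (x : M * {poly K}) (w : N) : x.2 != 0 -> pact x.2 w = g x.1 ->
  rat_lift (frac x) = w.
Proof. by move=> x2 E; apply: (rational_pact_inj HN x2); rewrite rat_lift_frac. Qed.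

Lemma rat_lift_linear : K_linear rat_lift.
Proof.
have [[gD gZ] _ _ _] := Hg; split.
  apply: (frac_ind2 HM) => d u w d_neq0; rewrite fracD //.
  apply: rat_lift_fracE => //=; apply: (eq_of_vspace HNsl2).
  rewrite gD !vaddE (@pactDr _ _ HNsl2).
  by rewrite (rat_lift_frac (x := (u, d))) // (rat_lift_frac (x := (w, d))).
move=> c; apply: frac_ind => x x2; rewrite fracZ //.
apply: rat_lift_fracE => //=; apply: (eq_of_vspace HNsl2).
by rewrite gZ !vscaleE (@pactZr _ _ HNsl2) rat_lift_frac.
Qed.

Lemma rat_lift_morph : sl2_morphism rat_lift.
Proof.
have [_ g_e g_f g_h] := Hg.
split; first exact: rat_lift_linear.
- apply: frac_ind => x x2; rewrite frac_rho_e //.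
  apply: rat_lift_fracE; first exact: shiftp_neq0.
  by rewrite g_e -rat_lift_frac // (rho_e_pact two).
- apply: frac_ind => x x2; rewrite frac_rho_f //.
  apply: rat_lift_fracE; first exact: shiftp_neq0.
  by rewrite g_f -rat_lift_frac // (rho_f_pact two).
- apply: frac_ind => x x2; rewrite frac_rho_h //.
  by apply: rat_lift_fracE => //; rewrite g_h -rat_lift_frac // rho_h_pact.
Qed.

Lemma rat_lift_unit (v : M) : rat_lift (rat_unit v) = g v.
Proof. by apply: rat_lift_fracE; rewrite ?oner_neq0 //= (@pact1 _ _ HNsl2). Qed.

Lemma rat_lift_unique (h : rat_data M -> N) : sl2_morphism h ->
  (forall v, h (rat_unit v) = g v) -> h = rat_lift.
Proof.
move=> Hh h_unit; apply/funext; apply: frac_ind => x x2.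
apply/esym/rat_lift_fracE => //.
by rewrite -(morph_pact (rat_sl2 two HM) HNsl2 Hh) pact_frac_den // h_unit.
Qed.

End UniversalProperty.

Lemma rat_unit_bij (K : fieldType) (W : sl2data K) (HW : rational_mod W) :
  bijective (@rat_unit K W).
Proof.
have HWsl2 := rational_sl2 HW.
pose inv := rat_lift HW (fun v : W => v).
exists inv => [v|]; first exact: rat_lift_unit.
apply: frac_ind => x x2.
rewrite /rat_unit -(frac_expand HWsl2 x2 (x := (inv (frac x), 1))) ?oner_neq0 //.
by rewrite /expand mulr1 rat_lift_frac //; case: x x2.
Qed.

Lemma rat_map_faithful (K : fieldType) (V W : sl2data K) (g1 g2 : V -> W) :
  is_sl2mod V -> is_sl2mod W -> torsion_free W ->
  sl2_morphism g1 -> sl2_morphism g2 ->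
  (forall a : rat_data V, rat_map g1 a = rat_map g2 a) -> forall v : V, g1 v = g2 v.
Proof.
move=> HV HW tfW Hg1 Hg2 E v.
have := E (rat_unit v); rewrite !rat_map_unit // => /(frac_eq_den HW (oner_neq0 _)).
case=> s s_neq0 Es; have Hs : pact s (vsub (g1 v) (g2 v)) = vzero W.
  by apply: (eq_of_vspace HW); rewrite vsubE (@pactBr _ _ HW) Es subrr.
by apply/(eq_of_vspace HW)/subr0_eq; move: (tfW _ _ s_neq0 Hs); rewrite vsubE.
Qed.

Theorem theorem7p7 (R : realType) :
  (* F_rat is well defined: it maps sl(2)-Mod_tffr into R ... *)
  (forall V : sl2data R[i], tffr V -> rational_mod (rat_data V)) /\
  (* ... and morphisms to morphisms *)
  (forall (V W : sl2data R[i]) (g : V -> W), tffr V -> tffr W ->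
     sl2_morphism g -> sl2_morphism (rat_map g)) /\
  (* i_tffr is right adjoint to F_rat: there are universal arrows
     eta_V : V -> i_tffr (F_rat V), natural w.r.t. F_rat, ... *)
  (exists eta : forall V : sl2data R[i], V -> rat_data V,
     (forall V : sl2data R[i], tffr V -> sl2_morphism (eta V)) /\
     (forall (V W : sl2data R[i]) (g : V -> W), tffr V -> tffr W ->
        sl2_morphism g -> forall v : V, rat_map g (eta V v) = eta W (g v)) /\
     (forall (V W : sl2data R[i]) (g : V -> W), tffr V -> rational_mod W ->
        sl2_morphism g ->
        exists! h : rat_data V -> W, sl2_morphism h /\ forall v : V, h (eta V v) = g v) /\
     (* ... and the unit is an isomorphism on the full subcategory R
        (R is a reflective subcategory with reflector F_rat) *)
     (forall W : sl2data R[i], rational_mod W -> bijective (eta W))) /\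
  (* F_rat is faithful *)
  (forall (V W : sl2data R[i]) (g1 g2 : V -> W), tffr V -> tffr W ->
     sl2_morphism g1 -> sl2_morphism g2 ->
     (forall a : rat_data V, rat_map g1 a = rat_map g2 a) ->
     forall v : V, g1 v = g2 v).
Proof.
have two : (2 : R[i]) != 0 by rewrite pnatr_eq0.
split; first exact: rat_rational two.
split; first by move=> V W g [HV _ _] [HW _ _]; apply: rat_map_morph.
split.
  exists (@rat_unit _); split; first by move=> V [HV _ _]; apply: rat_unit_morph.
  split; first by move=> V W g [HV _ _] [HW _ _] Hg v; apply: rat_map_unit.
  split; last exact: rat_unit_bij.
  move=> V W g [HV _ _] HW Hg; exists (rat_lift HW g); split.
    by split; [apply: rat_lift_morph | apply: rat_lift_unit].
  by move=> h [Hh h_unit]; apply/esym/(rat_lift_unique two HV HW).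
by move=> V W g1 g2 [HV _ _] [HW tfW _]; apply: rat_map_faithful.
Qed.
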